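(* Let $d$ and $m$ be positive integers. Then $$\operatorname{CI}(W(d,m))=\operatorname{CI}(\operatorname{Sym}(d))\big(\operatorname{CI}^{(1)}(\operatorname{Hol}(\mathbb{Z}/m\mathbb{Z})),\dots,\operatorname{CI}^{(d)}(\operatorname{Hol}(\mathbb{Z}/m\mathbb{Z}))\big),$$ i.e. the polynomial $\operatorname{CI}(\operatorname{Sym}(d))\in\mathbb{Q}[x_1,\dots,x_d]$ evaluated at $x_j=\operatorname{CI}^{(j)}(\operatorname{Hol}(\mathbb{Z}/m\mathbb{Z}))$. In particular, if $q$ is a prime power with $d\mid q-1$, then $\operatorname{CI}(\operatorname{GCP}(d,q))$ is given by the same formula with $m=\frac{q-1}{d}$.
   Context: For a permutation $h$ of an $n$-element set, $\operatorname{CT}(h)=x_1^{k_1}\cdots x_n^{k_n}$ with $k_i$ the number of $i$-cycles; $\operatorname{CI}(G)=\frac1{|G|}\sum_{g\in G}\operatorname{CT}(g)$ for a finite permutation group $G$, and $\operatorname{CI}^{(j)}(G)$ is obtained from $\operatorname{CI}(G)$ by substituting $x_i\mapsto x_{ij}$ for all $i$. $\operatorname{Hol}(\mathbb{Z}/m\mathbb{Z})$ is the permutation group on $\mathbb{Z}/m\mathbb{Z}$ of maps $\lambda(a,b):x\mapsto ax+b$, $a$ a unit. $\operatorname{Sym}(d)$ is the symmetric group on $\{0,\dots,d-1\}$. $W(d,m)=\operatorname{Hol}(\mathbb{Z}/m\mathbb{Z})\wr_{\mathrm{imp}}\operatorname{Sym}(d)$, the permutation group on $\mathbb{Z}/m\mathbb{Z}\times\{0,\dots,d-1\}$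 of pairs $(\sigma,(g_0,\dots,g_{d-1}))$ ($\sigma\in\operatorname{Sym}(d)$, $g_i\in\operatorname{Hol}(\mathbb{Z}/m\mathbb{Z})$) acting by $(x,i)\mapsto(g_{\sigma(i)}(x),\sigma(i))$. $\operatorname{GCP}(d,q)$ is the permutation group on $\mathbb{F}_q^{\ast}$ of restrictions of those maps $\mathbb{F}_q\to\mathbb{F}_q$ that are permutations and are of the form $0\mapsto0$, $x\mapsto a_ix^{r_i}$ for $x\in\omega^iC$ ($i=0,\dots,d-1$), where $\omega$ is a primitive root, $C$ the index $d$ subgroup of $\mathbb{F}_q^{\ast}$, $a_i\in\mathbb{F}_q$, $r_i\in\{1,\dots,\frac{q-1}{d}\}$. *)

From HB Require Import structures.
From mathcomp Require Import all_boot all_order all_algebra all_fingroup.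
From mathcomp Require Import mpoly.
Set Implicit Arguments. Unset Strict Implicit. Unset Printing Implicit Defensive.
Import GRing.Theory.
Local Open Scope ring_scope.

(* Polynomials in the variables x_0, x_1, ..., x_n over Q; the variable x_i
   is 'X_(inord i).  x_0 never occurs (cycle lengths are >= 1); n is always
   chosen >= the degree of the permutation group so inord never truncates. *)
Definition xvar (n i : nat) : {mpoly rat[n.+1]} := 'X_(inord i).

(* CT(h) = prod_i x_i^{k_i}, k_i = number of i-cycles = product over the
   cycles (porbits) c of h of x_{|c|}. *)
Definition CT (T : finType) (n : nat) (h : {perm T}) : {mpoly rat[n.+1]} :=
  \prod_(c in porbits h) xvar n #|c|.

Definition CI (T : finType) (n : nat) (G : {set {perm T}}) : {mpoly rat[n.+1]} :=
  (#|G|%:R)^-1 *: \sum_(g in G) CT n g.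

Definition CIpow (k n : nat) (p : {mpoly rat[k.+1]}) (j : nat) : {mpoly rat[n.+1]} :=
  p \mPo [tuple xvar n (i * j) | i < k.+1].

Definition Hol (m : nat) : {set {perm 'I_m}} :=
  [set s : {perm 'I_m} | [exists a : 'I_m, exists b : 'I_m,
     coprime a m && [forall x : 'I_m, val (s x) == (a * x + b) %% m]%N]].

Definition Sym (d : nat) : {set {perm 'I_d}} := [set: {perm 'I_d}].

Definition W (d m : nat) : {set {perm ('I_m * 'I_d)}} :=
  [set s : {perm ('I_m * 'I_d)} | [exists sigma : {perm 'I_d},
     exists g : {ffun 'I_d -> {perm 'I_m}},
     [forall i, g i \in Hol m] &&
     [forall p : 'I_m * 'I_d, s p == (g (sigma p.2) p.1, sigma p.2)]]].

(* GCP(d,q) on F_q^* = {unit F}, with primitive root w and C the index-d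
   subgroup of F^*: restrictions to F^* of permutations of F fixing 0 and
   equal to x |-> a_i x^{r_i} on the coset w^i C, with a_i in F and
   1 <= r_i <= (q-1)/d.  (Since 0 |-> 0, such a map permutes F iff its
   restriction permutes F^*.) *)
Definition GCP (F : finFieldType) (d : nat) (w : {unit F})
    (C : {set {unit F}}) : {set {perm {unit F}}} :=
  [set s : {perm {unit F}} | [exists a : {ffun 'I_d -> F},
     exists r : {ffun 'I_d -> 'I_#|F|},
     [forall i, (1 <= r i <= #|F|.-1 %/ d)%N] &&
     [forall i : 'I_d, forall u : {unit F},
        (u \in lcoset C (w ^+ i)%g) ==> (val (s u) == a i * (val u) ^+ r i)]]].

Definition wreath_CI (n d m : nat) : {mpoly rat[n.+1]} :=
  CI d (Sym d) \mPo [tuple CIpow n (CI m (Hol m)) i | i < d.+1].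

From HB Require Import structures.
From mathcomp Require Import all_boot all_order all_algebra all_fingroup.
From mathcomp Require Import mpoly.
From mathcomp Require Import all_solvable all_field zify.
Set Implicit Arguments. Unset Strict Implicit. Unset Printing Implicit Defensive.
Import GRing.Theory Num.Theory.
Local Open Scope ring_scope.

(* Write an element of W(d,m) as a pair
   (sigma, g).  For a cycle of sigma of length l with representative i, the
   "return map" h_i = g_(sigma i) then ... then g_(sigma^l i) is a permutation
   of the fibre over i, and the cycles of (sigma, g) above the cycle of i
   correspond to the cycles c of h_i, with length l |c| (CT_wr).  The
   bijection "twist" of Hol^d, which at each representative i precomposes g_i
   with the inverse of the rest of the return map, turns h_i into g_i; so
   the sum over g in Hol^d factors into a product of sums over Hol
   (sum_Holfam), i.e. CT(sigma) evaluated at the CI^(l)(Hol) (CI_W).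

   The labelling (k, i) |-> w^(i + d k) identifies
   Z/m x {0..d-1} with F^*, the block Z/m x {i} going to the coset w^i C.
   In these coordinates x |-> a x^r on a coset becomes an affine map between
   blocks, so relabelling maps W(d,m) onto GCP(d,q) (GCP_image).  Cycle
   indices are invariant under relabelling (CI_relabel), so Part 2 follows
   from Part 1. *)

Section OrbitLength.
Local Open Scope nat_scope.
Variable T : finType.
Implicit Types (s : {perm T}) (x : T).

Lemma porbit_expg_fix s x n : ((s ^+ n)%g x == x) = (#|porbit s x| %| n).
Proof.
set c := #|porbit s x|.
have s_c : (s ^+ c)%g x = x by rewrite permX iter_porbit.
have s_mod k : (s ^+ k)%g x = (s ^+ (k %% c))%g x.
  rewrite {1}(divn_eq k c) expgD permM.
  by elim: (k %/ c) => [|j IH]; rewrite ?mul0n ?expg0 ?perm1 // mulSn expgD permM s_c.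
rewrite s_mod /dvdn; have lt_c : n %% c < c by rewrite ltn_mod lt0n card_porbit_neq0.
case: (posnP (n %% c)) => [->|pos]; first by rewrite expg0 perm1 !eqxx.
apply/negP => /eqP E.
have := nth_uniq x (_ : n %% c < size (traject s x c)) (_ : 0 < size (traject s x c))
  (uniq_traject_porbit s x).
rewrite !size_traject !nth_traject ?(ltn_trans pos lt_c) // => /(_ lt_c isT).
by rewrite -permX E eqxx => /esym /eqP h; rewrite h in pos.
Qed.

Lemma card_porbit_eq s x c :
  (forall n, ((s ^+ n)%g x == x) = (c %| n)) -> #|porbit s x| = c.
Proof.
move=> H; apply/eqP; rewrite eqn_dvd -porbit_expg_fix H dvdnn /=.
by rewrite -H porbit_expg_fix dvdnn.
Qed.

End OrbitLength.

Section Relabel.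
Variables (T U : finType) (f : T -> U) (f' : U -> T).
Hypotheses (fK : cancel f f') (f'K : cancel f' f).

Definition relabel_fun (s : {perm T}) (u : U) := f (s (f' u)).
Lemma relabel_fun_inj s : injective (relabel_fun s).
Proof. by move=> u v /(can_inj fK) /perm_inj /(can_inj f'K). Qed.
Definition relabel (s : {perm T}) : {perm U} := perm (@relabel_fun_inj s).

Lemma relabelE s x : relabel s (f x) = f (s x).
Proof. by rewrite permE /relabel_fun fK. Qed.

Lemma relabelX s n x : (relabel s ^+ n)%g (f x) = f ((s ^+ n)%g x).
Proof.
elim: n => [|n IH]; first by rewrite !expg0 !perm1.
by rewrite !expgSr !permM IH relabelE.
Qed.

Lemma porbits_relabel s :
  porbits (relabel s) = (fun c : {set T} => f @: c) @: porbits s.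
Proof.
have porbit_f x : porbit (relabel s) (f x) = f @: porbit s x.
  apply/setP => u; apply/porbitP/imsetP => [[n ->]|[y /porbitP[n ->] ->]].
    by exists ((s ^+ n)%g x); [apply/porbitP; exists n|rewrite relabelX].
  by exists n; rewrite relabelX.
apply/setP => D; apply/imsetP/imsetP => [[u _ ->]|[c /imsetP[x _ ->] ->]].
  by exists (porbit s (f' u)); [apply: imset_f|rewrite -porbit_f f'K].
by exists (f x) => //; rewrite porbit_f.
Qed.

Lemma relabel_inj : injective relabel.
Proof.
by move=> s t E; apply/permP => x; apply: (can_inj fK); rewrite -!relabelE E.
Qed.

Lemma CT_relabel n s : CT n (relabel s) = CT n s.
Proof.
rewrite /CT porbits_relabel big_imset /=; last first.
  by move=> c c' _ _; apply: imset_inj; apply: (can_inj fK).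
by apply: eq_bigr => c _; rewrite card_imset //; apply: (can_inj fK).
Qed.

Lemma CI_relabel n (G : {set {perm T}}) (G' : {set {perm U}}) :
  G' = relabel @: G -> CI n G' = CI n G.
Proof.
move=> ->; rewrite /CI card_imset; last exact: relabel_inj.
rewrite big_imset /=; last by move=> ? ? _ _; apply: relabel_inj.
by congr (_ *: _); apply: eq_bigr => s _; rewrite CT_relabel.
Qed.
End Relabel.

Lemma relabelK (T U : finType) (f : T -> U) (f' : U -> T)
    (fK : cancel f f') (f'K : cancel f' f) (s : {perm U}) :
  relabel fK f'K (relabel f'K fK s) = s.
Proof. by apply/permP => u; rewrite !permE /relabel_fun !permE /relabel_fun !f'K. Qed.

Section Holomorph.
Local Open Scope nat_scope.
Variable m : nat.
Hypothesis m_pos : 0 < m.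

Lemma HolP (s : {perm 'I_m}) :
  reflect (exists a b : nat,
             coprime a m /\ forall x : 'I_m, val (s x) = (a * x + b) %% m)
          (s \in Hol m).
Proof.
rewrite inE; apply: (iffP existsP) => [[a /existsP[b /andP[ca /forallP H]]]|].
  by exists a, b; split=> // x; apply/eqP/H.
move=> [a [b [ca H]]]; exists (Ordinal (ltn_pmod a m_pos)).
apply/existsP; exists (Ordinal (ltn_pmod b m_pos)).
rewrite /= coprime_modl ca; apply/forallP => x; rewrite H /=.
by apply/eqP; rewrite modnDmr -modnDml modnDml -[in RHS]modnDml modnMml modnDml.
Qed.

Lemma Hol_group_set : group_set (Hol m).
Proof.
apply/andP; split.
  apply/HolP; exists 1, 0; split; first exact: coprime1n.
  by move=> x; rewrite perm1 mul1n addn0 modn_small.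
apply/subsetP => u /mulsgP[s t /HolP[a [b [ca Hs]]] /HolP[c [e [cc Ht]]] ->].
apply/HolP; exists (c * a), (c * b + e); split; first by rewrite coprimeMl cc ca.
move=> x; rewrite permM Ht Hs.
by rewrite -modnDml modnMmr modnDml mulnDr mulnA addnA.
Qed.

Definition HolG := Group Hol_group_set.

Lemma coprime_of_modinv r y : r * y = 1 %[mod m] -> coprime r m.
Proof.
move=> ry1; case: (ltngtP m 1) => [|m_gt1|->]; last by rewrite coprimen1.
  by rewrite ltnS leqn0 => /eqP m0; move: m_pos; rewrite m0.
rewrite (modn_small m_gt1) in ry1.
have r_pos : 0 < r by case: r ry1 => //; rewrite mul0n mod0n.
by apply: modn_coprime r_pos _; exists y.
Qed.

(* A permutation of Z/mZ given by an affine formula lies in Hol(Z/mZ): its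
   surjectivity forces the slope to be a unit. *)
Lemma affine_perm_Hol (h : {perm 'I_m}) R B :
  (forall y, val (h y) = (B + y * R) %% m) -> h \in Hol m.
Proof.
move=> hE; apply/HolP; exists R, B; split; last by move=> y; rewrite hE addnC mulnC.
pose z : 'I_m := Ordinal (ltn_pmod (B + 1) m_pos).
have := hE ((h^-1)%g z); rewrite permKV /= => /esym/eqP.
by rewrite eqn_modDl mulnC => /eqP; apply: coprime_of_modinv.
Qed.

End Holomorph.

Section WreathElement.
Local Open Scope nat_scope.
Variables d m : nat.

Definition wr_fun (sg : {perm 'I_d}) (g : {ffun 'I_d -> {perm 'I_m}})
  (p : 'I_m * 'I_d) := (g (sg p.2) p.1, sg p.2).
Lemma wr_fun_inj sg g : injective (wr_fun sg g).
Proof.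
move=> [y i] [z j] [] E1 /perm_inj E2; rewrite /= in E2; subst j.
by move/perm_inj: E1 => ->.
Qed.
Definition wr sg g : {perm ('I_m * 'I_d)} := perm (@wr_fun_inj sg g).
Lemma wrE sg g y i : wr sg g (y, i) = (g (sg i) y, sg i).
Proof. by rewrite permE. Qed.

Variables (sg : {perm 'I_d}) (g : {ffun 'I_d -> {perm 'I_m}}).
Local Notation s := (wr sg g).

(* transit i n = g_(sigma i) then ... then g_(sigma^n i): the permutation of
   the fibre picked up along n steps of sigma starting at i. *)
Fixpoint transit (i : 'I_d) n : {perm 'I_m} :=
  if n is n'.+1 then (transit i n' * g ((sg ^+ n'.+1)%g i))%g else 1%g.

Lemma wrX n y i : (s ^+ n)%g (y, i) = (transit i n y, (sg ^+ n)%g i).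
Proof.
elim: n y => [|n IH] y; first by rewrite !expg0 !perm1.
by rewrite expgSr permM IH wrE /= !permM expgSr permM.
Qed.

Definition clen i := #|porbit sg i|.
Definition ret i := transit i (clen i).

Lemma sg_clen i : (sg ^+ clen i)%g i = i.
Proof. by rewrite permX iter_porbit. Qed.

Lemma wrX_clen k y i : (s ^+ (clen i * k))%g (y, i) = ((ret i ^+ k)%g y, i).
Proof.
elim: k y => [|k IH] y; first by rewrite muln0 !expg0 !perm1.
by rewrite mulnS expgD permM wrX sg_clen IH expgS permM.
Qed.

Lemma card_porbit_wr y i : #|porbit s (y, i)| = clen i * #|porbit (ret i) y|.
Proof.
apply: card_porbit_eq => n; apply/idP/idP.
  move/eqP => E; have : (sg ^+ n)%g i == i by move: E; rewrite wrX => -[_ ->].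
  rewrite porbit_expg_fix -/(clen i) => /dvdnP[k Ek].
  move: E; rewrite Ek mulnC wrX_clen => -[/eqP].
  by rewrite porbit_expg_fix; apply: dvdn_mul.
move=> /dvdnP[j ->]; rewrite mulnC -mulnA wrX_clen.
have /eqP -> : (ret i ^+ (#|porbit (ret i) y| * j))%g y == y.
  by rewrite porbit_expg_fix dvdn_mulr.
by [].
Qed.

End WreathElement.

Section CycleRepresentatives.
Variables (T : finType) (sg : {perm T}).

Definition rep (i : T) := [pick j in porbit sg i] == Some i.

Lemma rep_ex i : exists2 r, rep r & r \in porbit sg i.
Proof.
have [j j_in pick_j] : exists2 j, j \in porbit sg i & [pick k in porbit sg i] = Some j.
  by case: pickP => [j j_in|H]; [exists j|have := H i; rewrite porbit_id].
exists j => //; rewrite /rep.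
have -> : porbit sg j = porbit sg i by apply/eqP; rewrite eq_porbit_mem.
by rewrite pick_j.
Qed.

Lemma rep_uniq r r' : rep r -> rep r' -> r \in porbit sg r' -> r = r'.
Proof.
rewrite /rep => /eqP E /eqP E' r_in.
have P : porbit sg r = porbit sg r' by apply/eqP; rewrite eq_porbit_mem.
by move: E; rewrite P E' => -[].
Qed.

Lemma prod_porbits_rep (R : comNzRingType) (F : {set T} -> R) :
  \prod_(c in porbits sg) F c = \prod_(i | rep i) F (porbit sg i).
Proof.
have -> : porbits sg = porbit sg @: [set i | rep i].
  apply/setP => c; apply/imsetP/imsetP => [[i _ ->]|[i _ ->]]; last by exists i.
  have [r r_rep r_in] := rep_ex i; exists r; first by rewrite inE.
  by apply/eqP; rewrite eq_porbit_mem porbit_sym.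
rewrite big_imset /=; first by apply: eq_bigl => i; rewrite inE.
move=> i j; rewrite !inE => ri rj E; apply: (rep_uniq ri rj).
by rewrite -E porbit_id.
Qed.

End CycleRepresentatives.

(* The cycles of (sigma, g) are indexed by pairs (i, c) with i a
   representative of a sigma-cycle and c a cycle of the return map of i. *)
Section WreathCycles.
Local Open Scope nat_scope.
Variables (d m : nat) (sg : {perm 'I_d}) (g : {ffun 'I_d -> {perm 'I_m}}).
Hypothesis m_pos : 0 < m.
Local Notation s := (wr sg g).
Local Notation ret := (ret sg g).
Local Notation rep := (rep sg).
Let y0 : 'I_m := Ordinal m_pos.

Definition cycle_above (p : 'I_d * {set 'I_m}) :=
  porbit s (odflt y0 [pick y in p.2], p.1).
Definition cycle_labels :=
  [set p : 'I_d * {set 'I_m} | rep p.1 && (p.2 \in porbits (ret p.1))].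

Lemma cycle_aboveE i y : cycle_above (i, porbit (ret i) y) = porbit s (y, i).
Proof.
rewrite /cycle_above /=; case: pickP => [z /porbitP[k ->]|H]; last first.
  by have := H y; rewrite porbit_id.
by apply/eqP; rewrite eq_porbit_mem; apply/porbitP; exists (clen sg i * k); rewrite wrX_clen.
Qed.

Lemma cycle_above_inj : {in cycle_labels &, injective cycle_above}.
Proof.
move=> [i c] [j e]; rewrite !inE /=.
move=> /andP[ri /imsetP[y _ ->]] /andP[rj /imsetP[z _ ->]].
rewrite !cycle_aboveE => E.
have : (y, i) \in porbit s (z, j) by rewrite -E porbit_id.
case/porbitP => n En; move: (En); rewrite wrX => -[_ Ei].
have ij : i = j by apply: rep_uniq ri rj _; rewrite Ei mem_porbit.
subst j; congr pair.
have : ((sg ^+ n)%g i == i) by rewrite -Ei.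
rewrite porbit_expg_fix => /dvdnP[k Ek].
move: En; rewrite Ek mulnC wrX_clen => -[->].
by apply/eqP; rewrite eq_porbit_mem mem_porbit.
Qed.

Lemma porbits_wr : porbits s = cycle_above @: cycle_labels.
Proof.
apply/setP => c; apply/imsetP/imsetP => [[[y j] _ ->]|[[i e] p_in ->]].
  have [r r_rep /porbitP[t Er]] := rep_ex sg j.
  exists (r, porbit (ret r) (transit sg g j t y)); first by rewrite inE /= r_rep imset_f.
  by rewrite cycle_aboveE Er -wrX porbit_perm.
move: p_in; rewrite inE /= => /andP[_ /imsetP[y _ ->]].
by exists (y, i); rewrite // cycle_aboveE.
Qed.

Lemma CT_wr n : CT n s =
  (\prod_(i | rep i) \prod_(c in porbits (ret i)) xvar n (clen sg i * #|c|))%R.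
Proof.
rewrite /CT porbits_wr big_imset /=; last exact: cycle_above_inj.
rewrite pair_big_dep /=; apply: eq_big => [[i c]|[i c]]; first by rewrite inE.
rewrite inE /= => /andP[_ /imsetP[y _ ->]].
by rewrite cycle_aboveE card_porbit_wr.
Qed.

End WreathCycles.

Definition Holfam (d m : nat) :=
  [set g : {ffun 'I_d -> {perm 'I_m}} | [forall i, g i \in Hol m]].

(* Summing over g in Hol^d, the return maps at the representatives of the
   cycles of sigma become independent uniform elements of Hol: the change of
   variables g |-> twist g replaces the return map by g_i at each
   representative i. *)
Section Untwisting.
Variables (d m : nat) (sg : {perm 'I_d}).
Hypothesis m_pos : (0 < m)%N.
Local Notation rep := (rep sg).
Local Notation clen := (clen sg).
Implicit Types g : {ffun 'I_d -> {perm 'I_m}}.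

Lemma clen_pos i : (0 < clen i)%N.
Proof. by rewrite lt0n card_porbit_neq0. Qed.

Lemma rep_expg_nrep j k : rep j -> (0 < k < clen j)%N -> ~~ rep ((sg ^+ k)%g j).
Proof.
move=> rj /andP[k0 k_lt]; apply/negP => rk.
have E := rep_uniq rk rj (mem_porbit _ _ _).
have : ((sg ^+ k)%g j == j) by rewrite E.
by rewrite porbit_expg_fix -/(clen j) => /(dvdn_leq k0); rewrite leqNgt k_lt.
Qed.

Definition pre_ret g j := transit sg g j (clen j).-1.

Lemma ret_pre_ret g j : ret sg g j = (pre_ret g j * g j)%g.
Proof.
rewrite /ret /pre_ret; have := clen_pos j; case E: (clen j) => [//|k] _ /=.
by rewrite -E sg_clen.
Qed.

Lemma pre_ret_nrep g g' j : (forall i, ~~ rep i -> g i = g' i) -> rep j ->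
  pre_ret g j = pre_ret g' j.
Proof.
move=> Egg' rj; rewrite /pre_ret.
have : ((clen j).-1 < clen j)%N by rewrite prednK ?clen_pos.
elim: (clen j).-1 => [//|k IH] k_lt /=.
by rewrite IH ?(ltnW k_lt) // Egg' // rep_expg_nrep // k_lt.
Qed.

Definition untwist g := [ffun j => if rep j then (pre_ret g j * g j)%g else g j].
Definition twist g := [ffun j => if rep j then ((pre_ret g j)^-1 * g j)%g else g j].

Lemma pre_ret_twist g j : rep j -> pre_ret (twist g) j = pre_ret g j.
Proof. by move=> rj; apply: pre_ret_nrep => // i ni; rewrite ffunE (negbTE ni). Qed.

Lemma twistK : cancel twist untwist.
Proof.
move=> g; apply/ffunP => j; rewrite !ffunE; case: ifP => rj; rewrite rj //.
by rewrite pre_ret_twist // mulgA mulgV mul1g.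
Qed.

Lemma ret_twist g j : rep j -> ret sg (twist g) j = g j.
Proof. by move=> rj; rewrite ret_pre_ret pre_ret_twist // ffunE rj mulgA mulgV mul1g. Qed.

Lemma transit_Hol g j k : g \in Holfam d m -> transit sg g j k \in Hol m.
Proof.
rewrite inE => /forallP g_Hol.
by elim: k => [|k IH] /=; [exact: (group1 (HolG m_pos))|exact: (groupM (G := HolG m_pos))].
Qed.

Lemma twist_Holfam g : (twist g \in Holfam d m) = (g \in Holfam d m).
Proof.
have Hol_both h : h \in Holfam d m -> (twist h \in Holfam d m) && (untwist h \in Holfam d m).
  move=> h_Hol; have pre_Hol j : pre_ret h j \in HolG m_pos by apply: transit_Hol.
  move: (h_Hol); rewrite !inE => /forallP H; apply/andP; split; apply/forallP => j;
  rewrite ffunE; case: ifP => _ //; apply: (groupM (G := HolG m_pos)) => //;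
  exact: (groupVr (G := HolG m_pos)).
apply/idP/idP => [/Hol_both/andP[_]|/Hol_both/andP[] //]; by rewrite twistK.
Qed.

Lemma sum_Holfam n (Psi : 'I_d -> {perm 'I_m} -> {mpoly rat[n.+1]}) :
  \sum_(g in Holfam d m) \prod_(i | rep i) Psi i (ret sg g i) =
  \prod_i (if rep i then \sum_(h in Hol m) Psi i h else #|Hol m|%:R).
Proof.
rewrite (reindex_inj (can_inj twistK)) /=.
under eq_bigl do rewrite twist_Holfam.
under eq_bigr => g _ do under eq_bigr => i ri do rewrite ret_twist //.
transitivity (\prod_i \sum_(h in Hol m) (if rep i then Psi i h else 1)); last first.
  by apply: eq_bigr => i _; case: ifP => _ //; rewrite sumr_const.
rewrite bigA_distr_big_dep; apply: eq_big => [g|g _].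
  by rewrite inE; apply/forallP/familyP.
by rewrite big_mkcond.
Qed.

End Untwisting.

Lemma CT_mPo (T : finType) k n (h : {perm T}) (lq : (k.+1).-tuple {mpoly rat[n.+1]}) :
  CT k h \mPo lq = \prod_(c in porbits h) lq`_(@inord k #|c|).
Proof. by rewrite /CT rmorph_prod; apply: eq_bigr => c _; apply: comp_mpolyXU. Qed.

Lemma CIpow_HolE n m l : CIpow n (CI m (Hol m)) l =
  (#|Hol m|%:R)^-1 *: \sum_(h in Hol m) \prod_(c in porbits h) xvar n (#|c| * l).
Proof.
rewrite /CIpow /CI comp_mpolyZ (big_morph _ (comp_mpolyD _) (comp_mpoly0 _)).
congr (_ *: _); apply: eq_bigr => h _; rewrite CT_mPo; apply: eq_bigr => c _.
rewrite (nth_mktuple _ 0 (inord #|c|)) inordK //.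
by rewrite ltnS (leq_trans (max_card _)) ?card_ord.
Qed.

Lemma prod_scale d (P : pred 'I_d) n (k : nat) (S : 'I_d -> {mpoly rat[n.+1]}) :
  (0 < k)%N ->
  \prod_i (if P i then S i else k%:R) = (k ^ d)%:R *: \prod_(i | P i) ((k%:R)^-1 *: S i).
Proof.
move=> k_pos; have kn0 : (k%:R : rat) != 0 by rewrite pnatr_eq0 -lt0n.
transitivity (\prod_i ((k%:R : rat) *: (if P i then (k%:R)^-1 *: S i else 1))).
  apply: eq_bigr => i _; case: ifP => _; last by rewrite scaler_nat.
  by rewrite scalerA mulfV // scale1r.
rewrite scaler_prod prodr_const card_ord -natrX; congr (_ *: _).
by rewrite [RHS]big_mkcond.
Qed.

Section WreathGroup.
Variables d m : nat.
Hypothesis m_pos : (0 < m)%N.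

Definition wr_pair (p : {perm 'I_d} * {ffun 'I_d -> {perm 'I_m}}) := wr p.1 p.2.

Lemma wr_pair_inj : injective wr_pair.
Proof.
move=> [s g] [s' g'] /= E.
have Es : s = s'.
  apply/permP => i; have := congr1 (fun t : {perm _} => t (Ordinal m_pos, i)) E.
  by rewrite /= !wrE => -[].
subst s'; congr pair; apply/ffunP => j; apply/permP => y.
have := congr1 (fun t : {perm _} => t (y, s^-1%g j)) E.
by rewrite /= !wrE permKV => -[].
Qed.

Lemma W_image : W d m = wr_pair @: setX [set: {perm 'I_d}] (Holfam d m).
Proof.
apply/setP => t; rewrite inE; apply/existsP/imsetP => [[s /existsP[g /andP[gH /forallP E]]]|].
  exists (s, g); first by rewrite !inE.
  by apply/permP => -[y i]; rewrite /wr_pair /= wrE; apply/eqP/E.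
move=> [[s g]]; rewrite !inE /= => gH ->; exists s; apply/existsP; exists g.
by rewrite gH; apply/forallP => -[y i]; rewrite /wr_pair /= wrE.
Qed.

Lemma card_Hol_gt0 : (0 < #|Hol m|)%N.
Proof. by apply/card_gt0P; exists 1%g; exact: (group1 (HolG m_pos)). Qed.

Lemma card_Holfam : #|Holfam d m| = (#|Hol m| ^ d)%N.
Proof.
rewrite -[X in (_ ^ X)%N](card_ord d) -card_ffun_on; apply: eq_card => g.
by rewrite inE; apply/forallP/familyP.
Qed.

Lemma average_CT_wr n (sg : {perm 'I_d}) :
  (#|Hol m| ^ d)%:R^-1 *: \sum_(g in Holfam d m) CT n (wr sg g) =
  CT d sg \mPo [tuple CIpow n (CI m (Hol m)) i | i < d.+1].
Proof.
under eq_bigr => g _ do rewrite (CT_wr _ _ m_pos).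
rewrite (sum_Holfam sg m_pos (fun i h => \prod_(c in porbits h) xvar n (clen sg i * #|c|))).
rewrite (prod_scale _ _ card_Hol_gt0) scalerA mulVf; last first.
  by rewrite pnatr_eq0 -lt0n expn_gt0 card_Hol_gt0.
rewrite scale1r CT_mPo prod_porbits_rep; apply: eq_bigr => i _.
rewrite (nth_mktuple _ 0 (inord #|porbit sg i|)) inordK; last first.
  by rewrite ltnS (leq_trans (max_card _)) ?card_ord.
rewrite CIpow_HolE; congr (_ *: _); apply: eq_bigr => h _; apply: eq_bigr => c _.
by rewrite mulnC.
Qed.

Lemma CI_W n : CI n (W d m) = wreath_CI n d m.
Proof.
rewrite /CI /wreath_CI W_image card_imset; last exact: wr_pair_inj.
rewrite big_imset /=; last by move=> ? ? _ _; apply: wr_pair_inj.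
rewrite cardsX card_Holfam comp_mpolyZ (big_morph _ (comp_mpolyD _) (comp_mpoly0 _)).
have -> : \sum_(p in setX [set: {perm 'I_d}] (Holfam d m)) CT n (wr_pair p) =
    \sum_(s : {perm 'I_d}) \sum_(g in Holfam d m) CT n (wr s g).
  by rewrite pair_big_dep /=; apply: eq_bigl => -[s g]; rewrite !inE.
rewrite natrM invfM -scalerA scaler_sumr; congr (_ *: _).
by apply: eq_big => [s|s _]; rewrite ?inE // average_CT_wr.
Qed.

End WreathGroup.

Lemma blockwise_affine_W d m (s : {perm ('I_m * 'I_d)}) : (0 < m)%N ->
  (forall i, exists R B T : nat, forall y : 'I_m,
     val (s (y, i)).1 = ((B + y * R) %% m)%N /\ val (s (y, i)).2 = T) ->
  s \in W d m.
Proof.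
move=> m_pos blocks; pose y0 : 'I_m := Ordinal m_pos.
pose tau i := (s (y0, i)).2.
have tauE y i : (s (y, i)).2 = tau i.
  have [R [B [T HT]]] := blocks i; apply: val_inj.
  by rewrite /tau (proj2 (HT y)) (proj2 (HT y0)).
have tau_inj : injective tau.
  pose tau' j := ((s^-1)%g (y0, j)).2.
  have tau'K : cancel tau' tau.
    by move=> j; rewrite /tau' -(tauE ((s^-1)%g (y0, j)).1) -surjective_pairing permKV.
  exact: can_inj (canF_sym tau'K).
pose sg := perm tau_inj.
have g_inj j : injective (fun y => (s (y, (sg^-1)%g j)).1).
  move=> y y' E; have : s (y, (sg^-1)%g j) = s (y', (sg^-1)%g j).
    by rewrite [LHS]surjective_pairing [RHS]surjective_pairing E !tauE.
  by move/perm_inj => -[].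
pose g := [ffun j => perm (g_inj j)].
rewrite inE; apply/existsP; exists sg; apply/existsP; exists g; apply/andP; split.
  apply/forallP => j; have [R [B [T HT]]] := blocks ((sg^-1)%g j).
  by apply: (affine_perm_Hol m_pos (R := R) (B := B)) => y; rewrite ffunE permE /= (proj1 (HT y)).
apply/forallP => -[y i] /=; rewrite ffunE permE /= permK.
by rewrite permE -(tauE y i) -surjective_pairing.
Qed.

Lemma Holfam_coeffs d m (g : {ffun 'I_d -> {perm 'I_m}}) : (0 < m)%N ->
  g \in Holfam d m ->
  exists A B : 'I_d -> nat, forall j y, val (g j y) = ((A j * y + B j) %% m)%N.
Proof.
move=> m_pos; rewrite inE => /forallP g_Hol.
have [AB HAB] : exists AB : 'I_d -> nat * nat,
    forall j y, val (g j y) = (((AB j).1 * y + (AB j).2) %% m)%N.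
  apply: (@fin_all_exists _ (fun=> (nat * nat)%type) (fun j (ab : nat * nat) =>
    forall y, val (g j y) = ((ab.1 * y + ab.2) %% m)%N)) => j.
  by have /(HolP m_pos)[A [B [_ HA]]] := g_Hol j; exists (A, B).
by exists (fun j => (AB j).1), (fun j => (AB j).2).
Qed.

Section Labels.
Local Open Scope nat_scope.

Lemma label_lt d m i k : i < d -> k < m -> i + d * k < m * d.
Proof.
move=> id km; apply: (@leq_trans (d * k.+1)); first by rewrite mulnS ltn_add2r.
by rewrite mulnC leq_mul2r km orbT.
Qed.

Lemma label_mod d i k : i < d -> (i + d * k) %% d = i.
Proof. by move=> id; rewrite addnC mulnC modnMDl modn_small. Qed.

Lemma label_div d i k : i < d -> (i + d * k) %/ d = k.
Proof.
move=> id; have d_pos : 0 < d by apply: leq_ltn_trans id.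
by rewrite addnC mulnC divnMDl // divn_small // addn0.
Qed.

Lemma label_decomp d m E : 0 < d -> E = E %% d + d * (E %/ d %% m) %[mod m * d].
Proof.
move=> d_pos; rewrite {1}(divn_eq E d) {1}(divn_eq (E %/ d) m).
by rewrite mulnDl -mulnA -addnA modnMDl addnC mulnC.
Qed.

Lemma label_affine D M A B k R x : R = A %[mod M] ->
  x + D * ((A * k + B) %% M) = x + D * B + D * k * R %[mod M * D].
Proof.
move=> RA.
have -> : D * ((A * k + B) %% M) = D * ((R * k + B) %% M).
  by rewrite -modnDml -modnMml -RA modnMml modnDml.
rewrite muln_modr [M * D]mulnC modnDmr; congr (_ %% _); lia.
Qed.

Definition posmod m A := if A %% m == 0 then m else A %% m.

Lemma posmodE m A : posmod m A = A %[mod m].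
Proof. by rewrite /posmod; case: ifP => [/eqP ->|_]; rewrite ?modnn ?modn_mod. Qed.

Lemma posmod_range m A : 0 < m -> 0 < posmod m A <= m.
Proof.
move=> m_pos; rewrite /posmod; case: ifP => [_|/negbT]; first by rewrite m_pos leqnn.
by rewrite -lt0n => ->; rewrite ltnW // ltn_pmod.
Qed.

End Labels.

Section Labelling.
Local Open Scope nat_scope.
Variables (F : finFieldType) (d : nat) (w : {unit F}) (C : {group {unit F}}).
Hypotheses (d_pos : 0 < d) (d_dvd : d %| #|F|.-1) (w_gen : <[w]>%g = [set: {unit F}])
  (C_index : #|[set: {unit F}] : C|%g = d).

Local Notation N := #|F|.-1.
Local Notation m := (#|F|.-1 %/ d).

Lemma order_w : #[w]%g = N.
Proof. by rewrite orderE w_gen card_finField_unit. Qed.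

Lemma N_eq : N = m * d.
Proof. by rewrite divnK. Qed.

Lemma m_gt0 : 0 < m.
Proof.
have : 0 < N by rewrite -order_w order_gt0.
by rewrite {1}N_eq muln_gt0 => /andP[].
Qed.

Definition wlab (p : 'I_m * 'I_d) : {unit F} := (w ^+ (p.2 + d * p.1))%g.
Definition label_of (E : nat) : 'I_m * 'I_d :=
  (Ordinal (ltn_pmod (E %/ d) m_gt0), Ordinal (ltn_pmod E d_pos)).

Lemma expw_label E : (w ^+ E)%g = wlab (label_of E).
Proof.
rewrite /wlab; apply/eqP; rewrite eq_expg_mod_order order_w /=; apply/eqP.
by have := label_decomp m E d_pos; rewrite -N_eq.
Qed.

Lemma label_ofK (p : 'I_m * 'I_d) : label_of (p.2 + d * p.1) = p.
Proof.
case: p => k i; congr pair; apply/val_inj => /=; last by rewrite label_mod.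
by rewrite label_div // modn_small.
Qed.

Lemma wlab_inj : injective wlab.
Proof.
move=> p q /eqP; rewrite /wlab eq_expg_mod_order order_w.
have lt_N (r : 'I_m * 'I_d) : r.2 + d * r.1 < N.
  by have := label_lt (ltn_ord r.2) (ltn_ord r.1); rewrite -N_eq.
rewrite !modn_small ?lt_N // => /eqP E.
by rewrite -(label_ofK p) E label_ofK.
Qed.

Lemma mem_cycle_w (u : {unit F}) : u \in <[w]>%g.
Proof. by rewrite w_gen inE. Qed.
Definition dlog (u : {unit F}) : nat := sval (cyclePmin (mem_cycle_w u)).
Lemma dlogK u : (w ^+ dlog u)%g = u.
Proof. by rewrite /dlog; case: (cyclePmin _) => i _ /= ->. Qed.

Definition wlab_inv (u : {unit F}) := label_of (dlog u).
Lemma wlab_invK : cancel wlab_inv wlab.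
Proof. by move=> u; rewrite /wlab_inv -expw_label dlogK. Qed.
Lemma wlabK : cancel wlab wlab_inv.
Proof. by move=> p; apply: wlab_inj; rewrite wlab_invK. Qed.

Lemma wlab_inv_expw E : wlab_inv (w ^+ E)%g = label_of E.
Proof. by rewrite expw_label wlabK. Qed.

(* C is the unique subgroup of index d of the cyclic group F^*. *)
Lemma C_cycle : (C :=: <[w ^+ d]>)%g.
Proof.
have m_dvd : m %| #[w]%g by rewrite order_w; apply/dvdnP; exists d; rewrite mulnC -N_eq.
have : C \in [set H : {group {unit F}} | H \subset <[w]>%g & #|H| == m].
  rewrite inE w_gen subsetT /=.
  have := LagrangeI [set: {unit F}]%G C; rewrite setTI C_index card_finField_unit.
  by rewrite -(eqn_pmul2r d_pos) -N_eq => ->.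
rewrite cycle_sub_group // => /set1P ->.
rewrite order_w; congr <[(w ^+ _)]>%g.
by have := N_eq; have := m_gt0; move: m => k k_pos ->; rewrite mulKn.
Qed.

Lemma wlab_coset (i : 'I_d) p : (wlab p \in lcoset C (w ^+ i)%g) = (p.2 == i).
Proof.
rewrite lcosetE mem_lcoset C_cycle /wlab; apply/idP/eqP => [|->]; last first.
  by rewrite expgD mulKg expgM mem_cycle.
case/cycleP => t; rewrite -expgM => /(congr1 (mulg (w ^+ i)%g)).
rewrite mulKVg -expgD => /eqP; rewrite eq_expg_mod_order order_w => /eqP.
by move/(congr1 (modn^~ d)); rewrite !modn_dvdm // !label_mod // => /val_inj.
Qed.

End Labelling.

Section GCPisW.
Local Open Scope nat_scope.
Variables (F : finFieldType) (d : nat) (w : {unit F}) (C : {group {unit F}}).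
Hypotheses (d_pos : 0 < d) (d_dvd : d %| #|F|.-1) (w_gen : <[w]>%g = [set: {unit F}])
  (C_index : #|[set: {unit F}] : C|%g = d).

Local Notation m := (#|F|.-1 %/ d).
Local Notation wlab := (@wlab F d w).
Local Notation wlab_inv := (wlab_inv d_pos d_dvd w_gen).
Let wlabK : cancel wlab wlab_inv := wlabK d_pos d_dvd w_gen.
Let wlab_invK : cancel wlab_inv wlab := wlab_invK d_pos d_dvd w_gen.
Let m_pos := m_gt0 d_dvd w_gen.

Lemma GCP_on_coset (t : {perm {unit F}}) i : t \in GCP d w C ->
  exists E r, forall y : 'I_m, t (wlab (y, i)) = (w ^+ (E + i * r + y * r * d))%g.
Proof.
rewrite inE => /existsP[a /existsP[r /andP[_ /forallP t_coset]]].
have tE (y : 'I_m) : val (t (wlab (y, i))) = (a i * val (wlab (y, i)) ^+ r i)%R.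
  have := t_coset i; move/forallP/(_ (wlab (y, i))).
  by rewrite (wlab_coset d_pos d_dvd w_gen C_index) eqxx /= => /eqP.
have a_neq0 : (a i != 0)%R.
  apply/negP => /eqP a0; have := tE (Ordinal m_pos); rewrite a0 GRing.mul0r => E.
  by have := valP (t (wlab (Ordinal m_pos, i))); rewrite E GRing.unitr0.
have [E aE] : exists E, a i = val (w ^+ E)%g.
  have a_unit : a i \is a GRing.unit by rewrite GRing.unitfE.
  have /cycleP[E aE] := mem_cycle_w w_gen (FinRing.Unit a_unit).
  by exists E; rewrite -aE.
exists E, (r i) => y; apply: val_inj.
have -> : (w ^+ (E + i * r i + y * r i * d))%g = (w ^+ E * wlab (y, i) ^+ r i)%g.
  by rewrite /wlab /= -expgM -expgD mulnDl addnA [d * y]mulnC mulnAC.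
by rewrite tE aE FinRing.val_unitM -FinRing.val_unitX.
Qed.

Lemma GCP_blockwise_affine (t : {perm {unit F}}) : t \in GCP d w C ->
  forall i : 'I_d, exists R B T : nat, forall y : 'I_m,
    val (relabel wlab_invK wlabK t (y, i)).1 = (B + y * R) %% m /\
    val (relabel wlab_invK wlabK t (y, i)).2 = T.
Proof.
move=> t_GCP i; have [E [r tE]] := GCP_on_coset i t_GCP.
exists r, ((E + i * r) %/ d), ((E + i * r) %% d) => y.
rewrite -{1 2}(wlabK (y, i)) !relabelE tE wlab_inv_expw /= [E + _ + _]addnC.
by rewrite divnMDl // modnMDl addnC.
Qed.

Lemma GCP_sub_W t : t \in GCP d w C -> relabel wlab_invK wlabK t \in W d m.
Proof. by move=> t_GCP; apply: blockwise_affine_W m_pos (GCP_blockwise_affine t_GCP). Qed.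

(* Conversely the labelled image of (sigma, g) is x |-> a_i x^(r_i) on w^i C,
   where g_(sigma i) = (y |-> A y + B), r_i represents A in {1, ..., m} and
   a_i = w^(sigma i + d B - r_i i). *)
Lemma W_sub_GCP s : s \in W d m -> relabel wlabK wlab_invK s \in GCP d w C.
Proof.
rewrite W_image => /imsetP[[sg g]]; rewrite in_setX /= => /andP[_ g_Hol] ->.
have [A [B gE]] := Holfam_coeffs m_pos g_Hol.
pose R i := posmod m (A (sg i)).
have R_lt i : R i < #|F|.
  have /andP[_ R_le] := posmod_range (A (sg i)) m_pos; apply: (leq_ltn_trans R_le).
  by apply: (leq_ltn_trans (leq_div _ _)); rewrite ltn_predL; apply/card_gt0P; exists 0%R.
pose a i := (w ^+ (sg i + d * B (sg i)) * (w ^+ (R i * i))^-1)%g.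
rewrite inE; apply/existsP; exists [ffun i => val (a i)].
apply/existsP; exists [ffun i => Ordinal (R_lt i)]; apply/andP; split.
  by apply/forallP => i; rewrite ffunE /= posmod_range.
apply/forallP => i; apply/forallP => u; apply/implyP.
rewrite -(wlab_invK u); case: (wlab_inv u) => k j.
rewrite (wlab_coset d_pos d_dvd w_gen C_index) /= => /eqP ->.
have aE : (val (a i) * val (wlab (k, i)) ^+ R i)%R =
    val (w ^+ (sg i + d * B (sg i) + d * k * R i))%g.
  rewrite -FinRing.val_unitX -FinRing.val_unitM; congr val.
  rewrite /a /wlab /= -expgM mulnDl [i * _]mulnC expgD mulgA.
  by rewrite -(mulgA _ _ (w ^+ (R i * i))%g) mulVg mulg1 -expgD mulnAC.
rewrite relabelE /wr_pair wrE !ffunE aE.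
rewrite val_eqE /wlab /= eq_expg_mod_order (order_w w_gen) gE.
have := label_affine d (B (sg i)) k (sg i) (posmodE m (A (sg i))).
by rewrite -(N_eq d_dvd) => /eqP.
Qed.

Lemma GCP_image : GCP d w C = relabel wlabK wlab_invK @: W d m.
Proof.
apply/setP => t; apply/idP/imsetP => [t_GCP|[s s_W ->]]; last exact: W_sub_GCP.
by exists (relabel wlab_invK wlabK t); [exact: GCP_sub_W|rewrite relabelK].
Qed.

Lemma CI_GCP : CI #|F|.-1 (GCP d w C) = wreath_CI #|F|.-1 d m.
Proof. by rewrite (CI_relabel _ GCP_image) CI_W. Qed.

End GCPisW.

Theorem proposition6p2 :
  (forall d m : nat, (0 < d)%N -> (0 < m)%N ->
     CI (d * m) (W d m) = wreath_CI (d * m) d m) /\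
  (forall (F : finFieldType) (d : nat) (w : {unit F}) (C : {group {unit F}}),
     (0 < d)%N -> (d %| #|F|.-1)%N ->
     <[w]>%g = [set: {unit F}] ->
     #|[set: {unit F}] : C|%g = d ->
     CI (#|F|.-1) (GCP d w C) = wreath_CI (#|F|.-1) d (#|F|.-1 %/ d)).
Proof.
split; first by move=> d m _ m_pos; apply: CI_W.
by move=> F d w C d_pos d_dvd w_gen C_index; apply: CI_GCP.
Qed.
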